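(* Let $q$ be a prime power, $M\geq2$ an integer, $k\geq 1$, and let $f\in\mathbb{F}_q[x]$ be a SRIM polynomial of degree $2k$ such that $f(x^M)$ has a SRIM factor of degree $2k$. Let $C_f\in\mathrm{Sp}(2k,q)$ be an element with characteristic polynomial $f$. Then there exists $\alpha\in\mathrm{Sp}(2k,q)$ with $\alpha^M=C_f$.
   Context: For a monic polynomial $f$ of degree $r$ with $f(0)\neq0$, $f^*(x)=f(0)^{-1}x^rf(x^{-1})$; $f$ is self-reciprocal if $f=f^*$. SRIM means self-reciprocal irreducible monic. $\mathrm{Sp}(2k,q)$ is the symplectic group of a non-degenerate alternating form on $\mathbb{F}_q^{2k}$. *)

From HB Require Import structures.
From mathcomp Require Import all_boot all_order all_algebra all_field.
Set Implicit Arguments. Unset Strict Implicit. Unset Printing Implicit Defensive.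
Import GRing.Theory.
Local Open Scope ring_scope.

(* Reciprocal of a polynomial f of degree r with f(0) <> 0:
   f^*(x) = f(0)^{-1} x^r f(1/x); the coefficient list of x^r f(1/x) is the
   reversed coefficient list of f. *)
Definition recip_poly (R : fieldType) (f : {poly R}) : {poly R} :=
  (f`_0)^-1 *: Poly (rev f).

Definition SRIM (R : fieldType) (f : {poly R}) : Prop :=
  [/\ f \is monic, irreducible_poly f, f`_0 != 0 & recip_poly f = f].

(* non-degenerate alternating form on row vectors F^n: B(u,v) = u J v^T *)
Definition nondeg_alt (R : fieldType) (n : nat) (J : 'M[R]_n) : Prop :=
  [/\ forall i, J i i = 0, J^T = - J & J \in unitmx].

Definition Sp (R : fieldType) (n : nat) (J : 'M[R]_n) : {pred 'M[R]_n} :=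
  [pred A | A *m J *m A^T == J].

(* matrix power (n need not be syntactically a successor) *)
Definition mxpow (R : fieldType) (n : nat) (A : 'M[R]_n) (m : nat) : 'M[R]_n :=
  iter m (mulmx A) 1%:M.

From HB Require Import structures.
From mathcomp Require Import all_boot all_order all_algebra all_field.
From mathcomp Require Import ring zify.
Set Implicit Arguments.
Unset Strict Implicit.
Unset Printing Implicit Defensive.

Import GRing.Theory.
Local Open Scope ring_scope.

(* Since f is irreducible and g | f(X^M) has the same degree, X |-> X^M
   induces an injective, hence (F being finite) bijective, map
   F[X]/(f) -> F[X]/(g).  Pick p with p(X^M) = X mod g; then p^M = X mod f,
   so alpha := p(C_f) satisfies alpha^M = C_f.  Since g is self-reciprocal,
   X |-> X^-1 is an endomorphism of F[X]/(g), and transporting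
   p(X^M) p(X^-M) = X X^-1 = 1 mod g back gives p(X) p(X^-1) = 1 mod f.
   As C_f J C_f^T = J gives J C_f^T = C_f^-1 J, this is exactly
   alpha J alpha^T = J. *)

Section PolyCongruences.
Variable F : fieldType.
Implicit Types a b g p w : {poly F}.

Lemma dvdp_comp_sub a b p : a - b %| (p \Po a) - (p \Po b).
Proof.
elim/poly_ind: p => [|p c IHp]; first by rewrite !comp_poly0 subr0 dvdp0.
rewrite !comp_poly_MXaddC.
have -> : (p \Po a) * a + c%:P - ((p \Po b) * b + c%:P) =
    ((p \Po a) - (p \Po b)) * a + (p \Po b) * (a - b) by ring.
by apply: dvdp_add; [apply: dvdp_mulr | apply: dvdp_mull].
Qed.

Lemma dvdp_subX1 a n : a - 1 %| a ^+ n - 1.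
Proof. by rewrite subrX1 dvdp_mulr. Qed.

Lemma coprimep_X p : p`_0 != 0 -> coprimep p 'X.
Proof.
by move=> p0; rewrite -[X in coprimep _ X]subr0 coprimep_XsubC rootE horner_coef0.
Qed.

Lemma Xinv_modp p : p`_0 != 0 -> exists w, p %| 'X * w - 1.
Proof.
move=> /coprimep_X/Bezout_eq1_coprimepP [[v w] /= vw1].
exists w; rewrite -vw1 [w * _]mulrC opprD addrA addrAC subrr add0r.
by rewrite dvdpNr dvdp_mull.
Qed.

Lemma Poly_rev_sum p :
  Poly (rev p) = \sum_(i < size p) p`_i *: 'X^((size p).-1 - i).
Proof.
rewrite (reindex_inj rev_ord_inj) /=.
have -> : Poly (rev p) = \poly_(i < size p) (rev p)`_i.
  apply/polyP => j; rewrite coef_Poly coef_poly.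
  by case: ltnP => // ?; rewrite nth_default ?size_rev.
rewrite poly_def; apply: eq_bigr => i _.
by rewrite nth_rev //; congr (_ *: 'X^_); case: i => i /= ?; lia.
Qed.

Lemma dvdp_Xn_comp_Xinv g w p : g %| 'X * w - 1 ->
  g %| 'X^((size p).-1) * (p \Po w) - Poly (rev p).
Proof.
move=> gw; rewrite Poly_rev_sum comp_polyE mulr_sumr -sumrB.
apply: (big_ind (fun x => g %| x)) => [||i _]; [exact: dvdp0 | exact: dvdp_add|].
have le_i : (i <= (size p).-1)%N.
  by rewrite -ltnS (leq_trans (ltn_ord i)) // leqSpred.
have -> : 'X^((size p).-1) * (p`_i *: w ^+ i) - p`_i *: 'X^((size p).-1 - i) =
    p`_i *: ('X^((size p).-1 - i) * (('X * w) ^+ i - 1)).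
  rewrite -{1}(subnK le_i) exprD exprMn -scalerAr -scalerBr.
  by rewrite mulrBr mulr1 mulrA.
rewrite -mul_polyC; do 2 apply: dvdp_mull.
exact: dvdp_trans gw (dvdp_subX1 _ _).
Qed.

Lemma dvdp_comp_Xinv_self g w : g`_0 != 0 -> recip_poly g = g ->
  g %| 'X * w - 1 -> g %| g \Po w.
Proof.
move=> g0 gg gw; have := dvdp_Xn_comp_Xinv g gw.
have -> : Poly (rev g) = g`_0 *: recip_poly g.
  by rewrite /recip_poly scalerA divff // scale1r.
rewrite gg dvdp_subl ?dvdpZr // Gauss_dvdpr //.
by rewrite coprimep_expr // coprimep_X.
Qed.

Lemma dvdp_comp_Xinv g w a b : g`_0 != 0 -> recip_poly g = g ->
  g %| 'X * w - 1 -> g %| a - b -> g %| (a \Po w) - (b \Po w).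
Proof.
move=> g0 gg gw ab; rewrite -comp_polyB.
exact: dvdp_trans (dvdp_comp_Xinv_self g0 gg gw) (dvdp_comp_poly w ab).
Qed.

End PolyCongruences.

Section IrreducibleCompXn.
Variables (F : fieldType) (f g : {poly F}) (M : nat).
Hypotheses (f_irr : irreducible_poly f) (g_gt1 : (1 < size g)%N)
  (g_dvd_fM : g %| f \Po 'X^M).

Lemma irredp_dvdp_comp_Xn h : g %| h \Po 'X^M -> f %| h.
Proof.
move=> gh; apply: contraT; rewrite -irreducible_poly_coprime //.
move=> /(coprimep_comp_poly 'X^M)/(coprimep_dvdl gh)/(coprimep_dvdr g_dvd_fM).
by rewrite coprimepp gtn_eqF.
Qed.

Lemma irredp_dvdp_root_Xn p : g %| p \Po 'X^M - 'X -> f %| p ^+ M - 'X.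
Proof.
move=> gp; apply: irredp_dvdp_comp_Xn.
by rewrite comp_polyB comp_polyX rmorphXn /= subrXX dvdp_mulr.
Qed.

Lemma irredp_dvdp_mul_comp_Xinv p u : g`_0 != 0 -> recip_poly g = g ->
  g %| p \Po 'X^M - 'X -> f %| 'X * u - 1 -> f %| p * (p \Po u) - 1.
Proof.
move=> g0 gg gp fu; have [w gw] := Xinv_modp g0.
set P := p \Po 'X^M; set U := u \Po 'X^M.
have gU : g %| 'X^M * U - 1.
  apply: dvdp_trans g_dvd_fM _.
  have := dvdp_comp_poly 'X^M fu.
  by rewrite comp_polyB comp_polyM comp_polyX rmorph1.
have gwU : g %| w ^+ M - U.
  have -> : w ^+ M - U = U * (('X * w) ^+ M - 1) - w ^+ M * ('X^M * U - 1).
    by rewrite exprMn; ring.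
  apply: dvdp_sub; apply: dvdp_mull => //.
  exact: dvdp_trans gw (dvdp_subX1 _ _).
have gpU : g %| (p \Po U) - w.
  have gPw : g %| (P \Po w) - w.
    by rewrite -[X in _ - X]comp_polyX dvdp_comp_Xinv.
  have -> : (p \Po U) - w = ((P \Po w) - w) - ((p \Po w ^+ M) - (p \Po U)).
    by rewrite -comp_polyA comp_Xn_poly; ring.
  by rewrite dvdp_sub // (dvdp_trans gwU) ?dvdp_comp_sub.
apply: irredp_dvdp_comp_Xn.
rewrite comp_polyB comp_polyM -comp_polyA rmorph1 -/P -/U.
have -> : P * (p \Po U) - 1 =
    (P - 'X) * (p \Po U) + 'X * ((p \Po U) - w) + ('X * w - 1) by ring.
by apply: dvdp_add => //; apply: dvdp_add; [apply: dvdp_mulr | apply: dvdp_mull].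
Qed.

End IrreducibleCompXn.

Lemma comp_Xn_modp_surj (F : finFieldType) (f g : {poly F}) M :
    irreducible_poly f -> (1 < size g)%N -> (size g <= size f)%N ->
    g %| f \Po 'X^M ->
  forall h, exists p, g %| p \Po 'X^M - h.
Proof.
move=> f_irr g_gt1 le_gf g_dvd h.
pose n := (size g).-1.
have size_modg q : (size (q %% g)%R <= n)%N.
  by rewrite -ltnS prednK ?ltn_modp -?size_poly_gt0 // ltnW.
pose phi (a : {poly_n F}) : {poly_n F} := npolyp n ((val a \Po 'X^M) %% g).
have phiE a : val (phi a) = (val a \Po 'X^M) %% g by rewrite /= npolypK.
have phi_inj : injective phi.
  move=> a b /(congr1 val); rewrite !phiE => ab_mod.
  have : f %| val (a - b).
    apply: (irredp_dvdp_comp_Xn f_irr g_gt1 g_dvd); apply/modp_eq0P.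
    by rewrite /= comp_polyB modpD modpN ab_mod subrr.
  apply: contraTeq; rewrite -subr_eq0 => ab_neq0.
  apply/negP => /(dvdp_leq ab_neq0); apply/negP; rewrite -ltnNge.
  apply: leq_ltn_trans (size_npoly _) (leq_trans _ le_gf).
  by rewrite ltn_predL ltnW.
have /codomP [a ah] := injF_onto phi_inj (npolyp n (h %% g)).
exists (val a); apply/modp_eq0P.
by rewrite modpD modpN -phiE -ah /= npolypK // subrr.
Qed.

Section HornerMx.
Variables (F : fieldType) (n : nat).
Implicit Types (A B J : 'M[F]_n.+1) (f p q u : {poly F}).

Lemma horner_mx_dvdp_eq A f p q :
  horner_mx A f = 0 -> f %| p - q -> horner_mx A p = horner_mx A q.
Proof.
move=> Af0 /dvdpP [r pq]; apply/eqP.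
by rewrite -subr_eq0 -rmorphB pq rmorphM /= Af0 mulr0.
Qed.

Lemma horner_mx_comp A p u : horner_mx A (p \Po u) = horner_mx (horner_mx A u) p.
Proof.
elim/poly_ind: p => [|p c IHp]; first by rewrite comp_poly0 !rmorph0.
by rewrite comp_poly_MXaddC !rmorphD !rmorphM /= IHp !horner_mx_X !horner_mx_C.
Qed.

Lemma horner_mx_intertwine J A B p :
  J *m A^T = B *m J -> J *m (horner_mx A p)^T = horner_mx B p *m J.
Proof.
move=> JAB; elim/poly_ind: p => [|p c IHp].
  by rewrite !rmorph0 trmx0 mulmx0 mul0mx.
rewrite !rmorphD !rmorphM /= !horner_mx_X !horner_mx_C linearD /= trmx_mul.
rewrite tr_scalar_mx mulmxDr mulmxDl mulmxA JAB -mulmxA IHp mulmxA.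
by rewrite (comm_mx_horner p (erefl (B *m B))) mul_mx_scalar mul_scalar_mx.
Qed.

Lemma horner_mx_Sp J A f p u :
    A \in Sp J -> horner_mx A f = 0 -> f %| 'X * u - 1 ->
  f %| p * (p \Po u) - 1 -> horner_mx A p \in Sp J.
Proof.
move=> /eqP AJ Af0 fu fpu; set U := horner_mx A u.
have AU : A *m U = 1%:M.
  by have := horner_mx_dvdp_eq Af0 fu; rewrite rmorphM rmorph1 /= horner_mx_X.
have JAt : J *m A^T = U *m J.
  by rewrite -[in RHS]AJ !mulmxA (mulmx1C AU) mul1mx.
have pp_inv : horner_mx A p *m horner_mx A (p \Po u) = 1%:M.
  by have := horner_mx_dvdp_eq Af0 fpu; rewrite rmorphM rmorph1.
rewrite inE -mulmxA (horner_mx_intertwine _ JAt) mulmxA -horner_mx_comp.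
by rewrite pp_inv mul1mx.
Qed.

Lemma mxpowE A m : mxpow A m = A ^+ m.
Proof. by elim: m => //= m ->; rewrite exprS. Qed.

End HornerMx.

Theorem lemma5p2 (F : finFieldType) (M k : nat) (f : {poly F})
    (J : 'M[F]_(k.*2)) (Cf : 'M[F]_(k.*2)) :
  (2 <= M)%N -> (1 <= k)%N ->
  SRIM f -> size f = (k.*2).+1 ->
  (exists g : {poly F}, [/\ SRIM g, size g = (k.*2).+1 & g %| f \Po 'X^M]) ->
  nondeg_alt J ->
  Cf \in Sp J -> char_poly Cf = f ->
  exists alpha : 'M[F]_(k.*2), alpha \in Sp J /\ mxpow alpha M = Cf.
Proof.
(* k = k'.+1 makes the dimension (k'.*2).+2 a successor, as horner_mx needs. *)
case: k J Cf => [|k] J Cf _ // _ [_ f_irr f0 _] size_f.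
move=> [g [[_ _ g0 gg] size_g g_dvd]] _ Cf_Sp Cf_char.
have g_gt1 : (1 < size g)%N by rewrite size_g.
have le_gf : (size g <= size f)%N by rewrite size_f size_g.
have [u fu] := Xinv_modp f0.
have [p gp] := comp_Xn_modp_surj f_irr g_gt1 le_gf g_dvd 'X.
have fpM := irredp_dvdp_root_Xn f_irr g_gt1 g_dvd gp.
have fpu := irredp_dvdp_mul_comp_Xinv f_irr g_gt1 g_dvd g0 gg gp fu.
have Cf_f : horner_mx Cf f = 0 by rewrite -Cf_char Cayley_Hamilton.
exists (horner_mx Cf p); split; first exact: horner_mx_Sp Cf_Sp Cf_f fu fpu.
by rewrite mxpowE -rmorphXn /= (horner_mx_dvdp_eq Cf_f fpM) horner_mx_X.
Qed.
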